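(* Let $\mathbb{K}\in\{\mathbb{R},\mathbb{C}\}$, $\mathbf{R}_U\in\mathbb{K}^{n\times n}$ self-adjoint positive definite, $U:=\mathbb{K}^n$ with $\langle\mathbf{x},\mathbf{y}\rangle_U:=\langle\mathbf{R}_U\mathbf{x},\mathbf{y}\rangle$ and norm $\|\cdot\|_U$. Fix $\mu$, $\mathbf{A}(\mu)\in\mathbb{K}^{n\times n}$, $\mathbf{b}(\mu)\in\mathbb{K}^n$, $\mathbf{u}(\mu)$ with $\mathbf{A}(\mu)\mathbf{u}(\mu)=\mathbf{b}(\mu)$, a subspace $U_r\subseteq U$, and $\mathbf{\Theta}\in\mathbb{K}^{k\times n}$. For $\mathbf{y}\in\mathbb{K}^n$ let $$\|\mathbf{y}\|_{U_r'}^{\mathbf{\Theta}}:=\max_{\mathbf{x}\in U_r\setminus\{\mathbf{0}\}}\frac{|\langle\mathbf{\Theta}\mathbf{R}_U^{-1}\mathbf{y},\mathbf{\Theta}\mathbf{x}\rangle|}{\|\mathbf{\Theta}\mathbf{x}\|},$$ $$\alpha_r^{\mathbf{\Theta}}(\mu):=\min_{\mathbf{x}\in U_r\setminus\{\mathbf{0}\}}\frac{\|\mathbf{A}(\mu)\mathbf{x}\|_{U_r'}^{\mathbf{\Theta}}}{\|\mathbf{x}\|_U},\qquad\beta_r^{\mathbf{\Theta}}(\mu):=\max_{\mathbf{x}\in(\mathrm{span}\{\mathbf{u}(\mu)\}+U_r)\setminus\{\mathbf{0}\}}\frac{\|\mathbf{A}(\mu)\mathbf{x}\|_{U_r'}^{\mathbf{\Theta}}}{\|\mathbf{x}\|_U}.$$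 Let $\mathbf{u}_r(\mu)\in U_r$ satisfy $\|\mathbf{b}(\mu)-\mathbf{A}(\mu)\mathbf{u}_r(\mu)\|_{U_r'}^{\mathbf{\Theta}}=0$. If $\alpha_r^{\mathbf{\Theta}}(\mu)>0$, then $$\|\mathbf{u}(\mu)-\mathbf{u}_r(\mu)\|_U\le\Big(1+\frac{\beta_r^{\mathbf{\Theta}}(\mu)}{\alpha_r^{\mathbf{\Theta}}(\mu)}\Big)\|\mathbf{u}(\mu)-\mathbf{P}_{U_r}\mathbf{u}(\mu)\|_U,$$ where $\mathbf{P}_{U_r}$ is the $\langle\cdot,\cdot\rangle_U$-orthogonal projection onto $U_r$.
   Context: $\langle\mathbf{x},\mathbf{y}\rangle=\mathbf{x}^{\mathrm{H}}\mathbf{y}$ is the canonical inner product and $\|\cdot\|$ the Euclidean norm. The semi-norm $\|\cdot\|_{U_r'}^{\mathbf{\Theta}}$ is understood to be used where it is well defined, i.e., when $\mathbf{\Theta}\mathbf{x}\neq\mathbf{0}$ for all nonzero $\mathbf{x}\in U_r$. *)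

From HB Require Import structures.
From mathcomp Require Import all_boot all_order all_algebra.
From mathcomp Require Import reals.
From mathcomp Require Import complex.
Set Implicit Arguments. Unset Strict Implicit. Unset Printing Implicit Defensive.
Import Order.TTheory GRing.Theory Num.Theory.
Local Open Scope ring_scope.

Section Generic.
(* K is the scalar field (R or C); cj its conjugation (identity over R),
   sq the nonnegative square root used for Euclidean-type norms. *)
Variables (K : numFieldType) (cj : K -> K) (sq : K -> K).

Definition dotK n (x y : 'cV[K]_n) : K := ((map_mx cj x)^T *m y) 0 0.
Definition enorm n (x : 'cV[K]_n) : K := sq (dotK x x).

Definition selfadjoint n (M : 'M[K]_n) : Prop := map_mx cj M^T = M.
Definition posdef n (M : 'M[K]_n) : Prop :=
  forall x : 'cV[K]_n, x != 0 -> 0 < dotK (M *m x) x.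

Definition innerU n (RU : 'M[K]_n) (x y : 'cV[K]_n) : K := dotK (RU *m x) y.
Definition normU n (RU : 'M[K]_n) (x : 'cV[K]_n) : K := sq (innerU RU x x).

Definition is_maxK (S : K -> Prop) (m : K) : Prop := S m /\ forall s, S s -> s <= m.
Definition is_minK (S : K -> Prop) (m : K) : Prop := S m /\ forall s, S s -> m <= s.

Definition dual_ratios n k (RU : 'M[K]_n) (Theta : 'M[K]_(k, n))
  (Ur : {vspace 'cV[K]_n}) (y : 'cV[K]_n) : K -> Prop :=
  fun r => exists x : 'cV[K]_n, [/\ x \in Ur, x != 0 &
     r = `|dotK (Theta *m (invmx RU *m y)) (Theta *m x)| / enorm (Theta *m x)].

Definition is_dual_seminorm n k (RU : 'M[K]_n) (Theta : 'M[K]_(k, n))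
  (Ur : {vspace 'cV[K]_n}) (dn : 'cV[K]_n -> K) : Prop :=
  forall y, is_maxK (dual_ratios RU Theta Ur y) (dn y).

Definition stab_ratios n (RU : 'M[K]_n) (dn : 'cV[K]_n -> K) (A : 'M[K]_n)
  (V : {vspace 'cV[K]_n}) : K -> Prop :=
  fun r => exists x : 'cV[K]_n, [/\ x \in V, x != 0 & r = dn (A *m x) / normU RU x].

Definition is_Uproj n (RU : 'M[K]_n) (Ur : {vspace 'cV[K]_n}) (v p : 'cV[K]_n) : Prop :=
  p \in Ur /\ forall x, x \in Ur -> innerU RU x (v - p) = 0.

Definition prop41_stmt : Prop :=
  forall (n k : nat) (RU : 'M[K]_n) (A : 'M[K]_n) (b u : 'cV[K]_n)
    (Ur : {vspace 'cV[K]_n}) (Theta : 'M[K]_(k, n)),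
  selfadjoint RU -> posdef RU ->
  A *m u = b ->
  (* the semi-norm is well defined: Theta injective on U_r *)
  (forall x, x \in Ur -> x != 0 -> Theta *m x != 0) ->
  forall dn : 'cV[K]_n -> K, is_dual_seminorm RU Theta Ur dn ->
  forall alpha, is_minK (stab_ratios RU dn A Ur) alpha ->
  forall beta, is_maxK (stab_ratios RU dn A (<[u]> + Ur)%VS) beta ->
  forall ur, ur \in Ur -> dn (b - A *m ur) = 0 ->
  forall Pu, is_Uproj RU Ur u Pu ->
  0 < alpha ->
  normU RU (u - ur) <= (1 + beta / alpha) * normU RU (u - Pu).

End Generic.

(* With w := P u - u_r, which lies in U_r, the defining property of alpha, the
   vanishing residual b - A u_r and the subadditivity of the dual seminorm give
     alpha ||w||_U <= ||A w|| <= ||A (P u - u)|| <= beta ||u - P u||_U,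
   the last step because P u - u lies in span{u} + U_r.  The triangle inequality
   for ||.||_U, a consequence of Cauchy-Schwarz, then bounds ||u - u_r||_U by
   ||u - P u||_U + ||w||_U. *)

From HB Require Import structures.
From mathcomp Require Import all_boot all_order all_algebra.
From mathcomp Require Import reals complex.
From mathcomp Require Import ring.

Set Implicit Arguments.
Unset Strict Implicit.
Unset Printing Implicit Defensive.
Import Order.TTheory GRing.Theory Num.Theory.
Local Open Scope ring_scope.

Section QuasiOptimality.
Variables (K : numFieldType) (cj : {rmorphism K -> K}) (sq : K -> K).
Hypothesis cjK : involutive cj.
Hypothesis cj_mulr_norm : forall z, cj z * z = `|z| ^+ 2.
Hypothesis ler_addr_cj : forall z, z + cj z <= `|z| *+ 2.
Hypothesis sq_ge0 : forall x : K, 0 <= x -> 0 <= sq x.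
Hypothesis sqK : forall x : K, 0 <= x -> sq x ^+ 2 = x.

Lemma sq_sqr t : 0 <= t -> sq (t ^+ 2) = t.
Proof.
move=> t_ge0; apply: (pexpIrn (n := 2)); rewrite ?nnegrE ?sq_ge0 ?exprn_ge0 //.
by rewrite sqK ?exprn_ge0.
Qed.

Lemma sq0 : sq 0 = 0.
Proof. by have := @sq_sqr 0 (lexx 0); rewrite expr0n. Qed.

Lemma ler_sq x y : 0 <= x -> x <= y -> sq x <= sq y.
Proof.
move=> x_ge0 le_xy; have y_ge0 := le_trans x_ge0 le_xy.
by rewrite -ler_sqr ?nnegrE ?sq_ge0 // !sqK.
Qed.

Lemma sq_gt0 x : 0 < x -> 0 < sq x.
Proof.
move=> x_gt0; have x_ge0 := ltW x_gt0; rewrite lt_def sq_ge0 // andbT.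
by apply: contraTneq x_gt0 => sqx0; rewrite -(sqK x_ge0) sqx0 expr0n ltxx.
Qed.

Lemma dotDl m (x y z : 'cV[K]_m) : dotK cj (x + y) z = dotK cj x z + dotK cj y z.
Proof. by rewrite /dotK map_mxD linearD /= mulmxDl mxE. Qed.

Lemma dot0l m (z : 'cV[K]_m) : dotK cj 0 z = 0.
Proof. by rewrite /dotK map_mx0 trmx0 mul0mx mxE. Qed.

Lemma dot_ge0 m (x : 'cV[K]_m) : 0 <= dotK cj x x.
Proof.
by rewrite /dotK mxE sumr_ge0 // => i _; rewrite !mxE cj_mulr_norm exprn_ge0.
Qed.

Lemma enorm_ge0 m (x : 'cV[K]_m) : 0 <= enorm cj sq x.
Proof. exact/sq_ge0/dot_ge0. Qed.

Section InnerProduct.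
Variables (n : nat) (RU : 'M[K]_n).
Hypotheses (RU_sa : selfadjoint cj RU) (RU_pd : posdef cj RU).

Local Notation "<< x , y >>" := (innerU cj RU x y).
Local Notation nU := (normU cj sq RU).

Lemma innerU_conj x y : << y, x >> = cj << x, y >>.
Proof.
have cjK_mx p q (M : 'M[K]_(p, q)) : map_mx cj (map_mx cj M) = M.
  by apply/matrixP => i j; rewrite !mxE cjK.
rewrite /innerU /dotK.
transitivity ((map_mx cj ((map_mx cj (RU *m x))^T *m y))^T 0 0); last by rewrite !mxE.
rewrite map_mxM -map_trmx cjK_mx !trmx_mul !trmxK map_mxM trmx_mul.
by rewrite [(map_mx cj RU)^T]map_trmx RU_sa mulmxA.
Qed.

Lemma innerUDr x y z : << x, y + z >> = << x, y >> + << x, z >>.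
Proof. by rewrite /innerU /dotK mulmxDr mxE. Qed.

Lemma innerUZr x a y : << x, a *: y >> = a * << x, y >>.
Proof. by rewrite /innerU /dotK -scalemxAr mxE. Qed.

Lemma innerUDl x y z : << x + y, z >> = << x, z >> + << y, z >>.
Proof. by rewrite innerU_conj innerUDr rmorphD -!innerU_conj. Qed.

Lemma innerUZl a x y : << a *: x, y >> = cj a * << x, y >>.
Proof. by rewrite innerU_conj innerUZr rmorphM -innerU_conj. Qed.

Lemma innerU0r x : << x, 0 >> = 0.
Proof. by rewrite /innerU /dotK mulmx0 mxE. Qed.

Lemma innerU_ge0 x : 0 <= << x, x >>.
Proof. by have [->|/RU_pd/ltW] := eqVneq x 0; rewrite ?innerU0r. Qed.

Lemma innerU_CauchySchwarz x y : `|<< x, y >>| <= nU x * nU y.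
Proof.
have [->|y_neq0] := eqVneq y 0.
  by rewrite innerU0r normr0 mulr_ge0 ?sq_ge0 ?innerU_ge0.
have q_gt0 : 0 < << y, y >> := RU_pd y_neq0.
set q := << y, y >> in q_gt0 *; set c := << y, x >>.
have cj_q : cj q = q by rewrite -innerU_conj.
(* 0 <= <q x - c y, q x - c y> = q (q <x,x> - |c|^2) *)
have := innerU_ge0 (q *: x + (- c) *: y).
rewrite !innerUDl !innerUDr !innerUZl !innerUZr -/q -/c rmorphN cj_q.
rewrite [<< x, y >>]innerU_conj -/c.
have -> : q * (q * << x, x >>) + q * (- c * cj c)
      + (- cj c * (q * c) + - cj c * (- c * q))
    = q * (q * << x, x >> - cj c * c) by ring.
rewrite pmulr_rge0 // subr_ge0 [cj c * c]mulrC -[c in c * _]cjK cj_mulr_norm => le_c.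
rewrite -ler_sqr ?nnegrE ?mulr_ge0 ?sq_ge0 ?innerU_ge0 //.
by rewrite exprMn !sqK ?innerU_ge0 // mulrC.
Qed.

Lemma ler_normUD x y : nU (x + y) <= nU x + nU y.
Proof.
rewrite /normU; set sx := sq << x, x >>; set sy := sq << y, y >>.
have sx_ge0 : 0 <= sx by rewrite sq_ge0 ?innerU_ge0.
have sy_ge0 : 0 <= sy by rewrite sq_ge0 ?innerU_ge0.
rewrite -[leRHS]sq_sqr ?addr_ge0 //; apply: ler_sq; first exact: innerU_ge0.
rewrite innerUDl !innerUDr [<< y, x >>]innerU_conj sqrrD !sqK ?innerU_ge0 //.
have -> : << x, x >> + << x, y >> + (cj << x, y >> + << y, y >>)
    = << x, x >> + << y, y >> + (<< x, y >> + cj << x, y >>) by ring.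
rewrite [leRHS]addrAC lerD2l; apply: le_trans (ler_addr_cj _) _.
by rewrite lerMn2r innerU_CauchySchwarz orbT.
Qed.

Lemma normU0 : nU 0 = 0.
Proof. by rewrite /normU innerU0r sq0. Qed.

Lemma normU_gt0 x : x != 0 -> 0 < nU x.
Proof. by move/RU_pd/sq_gt0. Qed.

Lemma normUN x : nU (- x) = nU x.
Proof. by rewrite /normU -scaleN1r innerUZl innerUZr rmorphN1 !mulN1r opprK. Qed.

Section DualSeminorm.
Variables (k : nat) (Theta : 'M[K]_(k, n)) (Ur : {vspace 'cV[K]_n}).
Variable dn : 'cV[K]_n -> K.
Hypothesis dnP : is_dual_seminorm cj sq RU Theta Ur dn.

Lemma dual_seminorm_ge0 y : 0 <= dn y.
Proof.
have [[x [_ _ ->]] _] := dnP y.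
by rewrite divr_ge0 ?normr_ge0 ?enorm_ge0.
Qed.

Lemma dual_seminorm0 : dn 0 = 0.
Proof.
apply/eqP; rewrite eq_le dual_seminorm_ge0 andbT.
by have [[x [_ _ ->]] _] := dnP 0; rewrite !mulmx0 dot0l normr0 mul0r.
Qed.

Lemma ler_dual_seminormD y z : dn (y + z) <= dn y + dn z.
Proof.
have [[x [x_in x_neq0 ->]] _] := dnP (y + z).
rewrite !mulmxDr dotDl.
rewrite (le_trans (ler_wpM2r _ (ler_normD _ _))) ?invr_ge0 ?enorm_ge0 //.
by rewrite mulrDl lerD // ?(dnP y).2 ?(dnP z).2 //; exists x.
Qed.

Section Stability.
Variables (A : 'M[K]_n) (V : {vspace 'cV[K]_n}).

Lemma stab_min_le alpha w :
  is_minK (stab_ratios cj sq RU dn A V) alpha -> w \in V ->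
  alpha * nU w <= dn (A *m w).
Proof.
move=> [_ alpha_min] w_in; have [->|w_neq0] := eqVneq w 0.
  by rewrite normU0 mulr0 dual_seminorm_ge0.
by rewrite -ler_pdivlMr ?normU_gt0 //; apply: alpha_min; exists w.
Qed.

Lemma stab_max_ge beta w :
  is_maxK (stab_ratios cj sq RU dn A V) beta -> w \in V ->
  dn (A *m w) <= beta * nU w.
Proof.
move=> [_ beta_max] w_in; have [->|w_neq0] := eqVneq w 0.
  by rewrite mulmx0 dual_seminorm0 normU0 mulr0.
by rewrite -ler_pdivrMr ?normU_gt0 //; apply: beta_max; exists w.
Qed.

End Stability.

Lemma quasi_optimality A b u alpha beta ur Pu :
    A *m u = b ->
    is_minK (stab_ratios cj sq RU dn A Ur) alpha ->
    is_maxK (stab_ratios cj sq RU dn A (<[u]> + Ur)%VS) beta ->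
    ur \in Ur -> dn (b - A *m ur) = 0 -> Pu \in Ur -> 0 < alpha ->
  nU (u - ur) <= (1 + beta / alpha) * nU (u - Pu).
Proof.
move=> Au alpha_min beta_max ur_in res0 Pu_in alpha_gt0.
have Pu_u_in : Pu - u \in (<[u]> + Ur)%VS.
  by rewrite addrC memv_add ?memvN ?memv_line.
have galerkin : A *m (Pu - ur) = (b - A *m ur) + A *m (Pu - u).
  by rewrite -Au !mulmxBr [RHS]addrC -addrA addKr.
have err_discrete : alpha * nU (Pu - ur) <= beta * nU (u - Pu).
  apply: le_trans (stab_min_le alpha_min (memvB Pu_in ur_in)) _.
  rewrite galerkin -normUN opprB; apply: le_trans (ler_dual_seminormD _ _) _.
  by rewrite res0 add0r (stab_max_ge beta_max).
have -> : u - ur = (u - Pu) + (Pu - ur) by rewrite addrA subrK.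
apply: le_trans (ler_normUD _ _) _.
by rewrite mulrDl mul1r lerD2l mulrAC ler_pdivlMr // mulrC.
Qed.

End DualSeminorm.
End InnerProduct.

Lemma quasi_optimality_stmt : prop41_stmt cj sq.
Proof.
move=> n k RU A b u Ur Theta RU_sa RU_pd Au _ dn dnP alpha alpha_min
  beta beta_max ur ur_in res0 Pu [Pu_in _] alpha_gt0.
exact: (quasi_optimality RU_sa RU_pd dnP Au alpha_min beta_max
  ur_in res0 Pu_in alpha_gt0).
Qed.

End QuasiOptimality.

Theorem proposition4p1 :
  forall R : realType,
    prop41_stmt (K := R) id Num.sqrt /\
    prop41_stmt (K := R[i]) Num.conj sqrtC.
Proof.
move=> R; split.
- apply: (@quasi_optimality_stmt R (idfun : {rmorphism R -> R})) => //.
  + by move=> z /=; rewrite real_normK ?num_real // expr2.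
  + by move=> z /=; rewrite -mulr2n lerMn2r ler_norm orbT.
  + by move=> x _; rewrite sqrtr_ge0.
  + by move=> x x_ge0; rewrite sqr_sqrtr.
- apply: (@quasi_optimality_stmt R[i] (Num.conj : {rmorphism R[i] -> R[i]})).
  + exact: conjCK.
  + by move=> z; rewrite /= normCK mulrC.
  + move=> z /=; have := (leif_Re_Creal z).1.
    by rewrite ReE ler_pdivrMr // mulr_natr.
  + by move=> x; rewrite sqrtC_ge0.
  + by move=> x _; rewrite sqrtCK.
Qed.
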